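(* Let $S$ be a Stone space with $|S|\ge 3$ and $I$ a set of isolated points of $S$. Then $Q_6(I,S)=(S\cup\zeta(S);\tau,\le,\zeta)$ is a $pm$-space of height $1$.
   Context: A $pm$-space is $(P;\tau,\le,\zeta)$ where $(P;\tau,\le)$ is a Priestley space (compact, and whenever $y\not\le x$ there is a clopen decreasing set containing $x$ but not $y$), $[X)$ is clopen for every clopen decreasing $X\subseteq P$, and $\zeta$ is a continuous order-reversing involution. $Q_6(I,S)$ is $S\cup\zeta(S)$ where $\zeta(S)$ is a disjoint homeomorphic copy of $S$, $\tau$ is the disjoint union topology, $\zeta$ interchanges each $s\in S$ with its copy $\zeta(s)$, and $\le$ is the partial order whose only strict comparabilities are: for $x,y\in S$, $x<\zeta(y)$ iff ($x\ne y$ or $x\notin I$). *)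

From Stdlib Require Import List.
Set Implicit Arguments.

Definition topology (X : Type) := (X -> Prop) -> Prop.
Definition open {X} (t : topology X) (U : X -> Prop) : Prop := t U.

Definition is_topology {X} (t : topology X) : Prop :=
  open t (fun _ => True) /\
  (forall U V, open t U -> open t V -> open t (fun x => U x /\ V x)) /\
  (forall F : (X -> Prop) -> Prop,
      (forall U, F U -> open t U) -> open t (fun x => exists U, F U /\ U x)).

Definition closed {X} (t : topology X) (A : X -> Prop) : Prop :=
  open t (fun x => ~ A x).
Definition clopen {X} (t : topology X) (A : X -> Prop) : Prop :=
  open t A /\ closed t A.

Definition compact {X} (t : topology X) : Prop :=
  forall F : (X -> Prop) -> Prop,
    (forall U, F U -> open t U) ->
    (forall x, exists U, F U /\ U x) ->
    exists l : list (X -> Prop),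
      (forall U, In U l -> F U) /\ (forall x, exists U, In U l /\ U x).

Definition hausdorff {X} (t : topology X) : Prop :=
  forall x y, x <> y -> exists U V, open t U /\ open t V /\ U x /\ V y /\
    (forall z, ~ (U z /\ V z)).

Definition connected_set {X} (t : topology X) (A : X -> Prop) : Prop :=
  ~ exists U V, open t U /\ open t V /\
      (forall x, A x -> U x \/ V x) /\
      (exists x, A x /\ U x) /\ (exists x, A x /\ V x) /\
      (forall x, ~ (A x /\ U x /\ V x)).

Definition totally_disconnected {X} (t : topology X) : Prop :=
  forall A, connected_set t A -> forall x y, A x -> A y -> x = y.

Definition stone_space {X} (t : topology X) : Prop :=
  is_topology t /\ compact t /\ hausdorff t /\ totally_disconnected t.

Definition isolated {X} (t : topology X) (s : X) : Prop :=
  open t (fun x => x = s).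

Definition continuous {X Y} (tX : topology X) (tY : topology Y) (f : X -> Y) : Prop :=
  forall V, open tY V -> open tX (fun x => V (f x)).

Definition partial_order {X} (le : X -> X -> Prop) : Prop :=
  (forall x, le x x) /\ (forall x y, le x y -> le y x -> x = y) /\
  (forall x y z, le x y -> le y z -> le x z).

Definition decreasing {X} (le : X -> X -> Prop) (A : X -> Prop) : Prop :=
  forall x y, A x -> le y x -> A y.

Definition upset {X} (le : X -> X -> Prop) (A : X -> Prop) : X -> Prop :=
  fun y => exists x, A x /\ le x y.

Definition priestley_space {X} (t : topology X) (le : X -> X -> Prop) : Prop :=
  partial_order le /\ compact t /\
  (forall x y, ~ le y x ->
     exists A, clopen t A /\ decreasing le A /\ A x /\ ~ A y).

Definition pm_space {X} (t : topology X) (le : X -> X -> Prop) (zeta : X -> X) : Prop :=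
  is_topology t /\ priestley_space t le /\
  (forall A, clopen t A -> decreasing le A -> clopen t (upset le A)) /\
  continuous t t zeta /\
  (forall x y, le x y -> le (zeta y) (zeta x)) /\
  (forall x, zeta (zeta x) = x).

Definition lt_of {X} (le : X -> X -> Prop) (x y : X) : Prop := le x y /\ x <> y.
Definition has_chain {X} (le : X -> X -> Prop) (n : nat) : Prop :=
  exists f : nat -> X, forall i, i < n -> lt_of le (f i) (f (S i)).
Definition height_is {X} (le : X -> X -> Prop) (n : nat) : Prop :=
  has_chain le n /\ ~ has_chain le (S n).

(* carrier S ∪ ζ(S) := S + S, with inl s = s and inr s = ζ(s) *)
Definition Q6_top {S} (t : topology S) : topology (S + S) :=
  fun U => open t (fun s => U (inl s)) /\ open t (fun s => U (inr s)).

Definition Q6_zeta {S} (x : S + S) : S + S :=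
  match x with inl s => inr s | inr s => inl s end.

(* only strict comparabilities: x < ζ(y) iff (x <> y or x ∉ I), for x, y ∈ S *)
Definition Q6_le {S} (I : S -> Prop) (x y : S + S) : Prop :=
  x = y \/
  match x, y with
  | inl a, inr b => a <> b \/ ~ I a
  | _, _ => False
  end.

(* Every strict comparability goes from S up to ζ(S), so chains have length at
   most 1, and a <> b gives the chain a < ζ(b).  Priestley separation of distinct
   points of S uses clopen separation in the Stone space S, which holds because
   quasi-components of a compact Hausdorff space are connected; separating x from
   ζ(x) for x in I uses that x is isolated, hence {x} is clopen.  The up-set of a
   clopen A is A together with the points ζ(s) lying strictly above some point of
   A ∩ S; these s form all of S, S minus one isolated point, or the empty set,
   so the up-set is again clopen. *)
From Stdlib Require Import List Classical FunctionalExtensionality PropExtensionality Lia.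

Definition list_inter {X} (l : list (X -> Prop)) : X -> Prop :=
  fun x => forall U, In U l -> U x.

Lemma list_choice {A B} (P : A -> B -> Prop) (Q : B -> Prop) (l : list A) :
  (forall x, In x l -> exists y, Q y /\ P x y) ->
  exists l', (forall y, In y l' -> Q y) /\ forall x, In x l -> exists y, In y l' /\ P x y.
Proof.
  induction l as [|x l IH]; intros H.
  - exists nil; split; intros _ [].
  - destruct IH as [l' [HQ HP]]; [intros; apply H; right; auto|].
    destruct (H x (or_introl eq_refl)) as [y [Qy Pxy]].
    exists (y :: l'); split.
    + intros z [<-|i]; auto.
    + intros z [<-|i]; [exists y; split; [left|]; auto|].
      destruct (HP z i) as [w [? ?]]; exists w; split; [right|]; auto.
Qed.

Lemma open_ext {X} {t : topology X} {U V : X -> Prop} :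
  (forall x, U x <-> V x) -> open t U -> open t V.
Proof.
  intros H HU. replace V with U; [exact HU|].
  extensionality x. apply propositional_extensionality, H.
Qed.

Lemma clopen_ext {X} {t : topology X} {U V : X -> Prop} :
  (forall x, U x <-> V x) -> clopen t U -> clopen t V.
Proof.
  intros H [oU cU]; split; [exact (open_ext H oU)|].
  apply (open_ext (U := fun x => ~ U x)); [intro x; rewrite H; tauto | exact cU].
Qed.

Lemma clopen_setC {X} (t : topology X) (A : X -> Prop) :
  clopen t A -> clopen t (fun x => ~ A x).
Proof.
  intros [oA cA]; split; [exact cA|].
  apply (open_ext (U := A)); [intro x; split; [auto | apply NNPP] | exact oA].
Qed.

Section Topology.
Variables (X : Type) (t : topology X).
Hypothesis Ht : is_topology t.

Lemma open_setT : open t (fun _ => True).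
Proof. apply Ht. Qed.

Lemma open_setI U V : open t U -> open t V -> open t (fun x => U x /\ V x).
Proof. apply Ht. Qed.

Lemma open_bigcup (F : (X -> Prop) -> Prop) :
  (forall U, F U -> open t U) -> open t (fun x => exists U, F U /\ U x).
Proof. apply Ht. Qed.

Lemma open_bigcup_preimage {Y} (m : X -> Y) (F : (Y -> Prop) -> Prop) :
  (forall U, F U -> open t (fun x => U (m x))) -> open t (fun x => exists U, F U /\ U (m x)).
Proof.
  intros HF.
  apply (open_ext (U := fun x => exists W,
           (exists U, F U /\ W = fun z => U (m z)) /\ W x)).
  - intro x; split; [intros [W [[U [FU ->]] Ux]]; eauto | intros [U [FU Ux]]].
    exists (fun z => U (m z)); eauto.
  - apply open_bigcup; intros W [U [FU ->]]; exact (HF U FU).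
Qed.

Lemma open_set0 : open t (fun _ => False).
Proof.
  apply (open_ext (U := fun x => exists U, (fun _ => False) U /\ U x)).
  - intro x; split; [intros [_ [[] _]] | intros []].
  - apply open_bigcup; intros _ [].
Qed.

Lemma open_setU U V : open t U -> open t V -> open t (fun x => U x \/ V x).
Proof.
  intros oU oV.
  apply (open_ext (U := fun x => exists W, (W = U \/ W = V) /\ W x)).
  - intro x; split; [intros [W [[-> | ->] Wx]]; auto | intros [Ux|Vx]; eauto].
  - apply open_bigcup; intros W [-> | ->]; auto.
Qed.

Lemma open_list_inter l : (forall U, In U l -> open t U) -> open t (list_inter l).
Proof.
  induction l as [|U l IH]; intros Hl.
  - apply (open_ext (U := fun _ => True)); [intro; split; [intros _ _ []| auto]|].
    exact open_setT.
  - apply (open_ext (U := fun x => U x /\ list_inter l x)).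
    + intro x; split; [intros [Ux Lx] V [<-|i]; [exact Ux | exact (Lx V i)] | intros H; split].
      * apply H; left; auto.
      * intros V i; apply H; right; exact i.
    + apply open_setI; [apply Hl; left; auto | apply IH; intros; apply Hl; right; auto].
Qed.

Lemma clopen_setT : clopen t (fun _ => True).
Proof.
  split; [exact open_setT|].
  apply (open_ext (U := fun _ => False)); [intro; tauto | exact open_set0].
Qed.

Lemma clopen_set0 : clopen t (fun _ => False).
Proof.
  split; [exact open_set0|].
  apply (open_ext (U := fun _ => True)); [intro; tauto | exact open_setT].
Qed.

Lemma clopen_setU C D : clopen t C -> clopen t D -> clopen t (fun x => C x \/ D x).
Proof.
  intros [oC cC] [oD cD]; split; [apply open_setU; auto|].
  apply (open_ext (U := fun x => ~ C x /\ ~ D x)); [intro; tauto | apply open_setI; auto].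
Qed.

Lemma clopen_list_inter l : (forall C, In C l -> clopen t C) -> clopen t (list_inter l).
Proof.
  intros Hl; split; [apply open_list_inter; intros C i; apply Hl, i|].
  apply (open_ext (U := fun x => exists W,
           (exists C, In C l /\ W = fun z => ~ C z) /\ W x)).
  - intro x; split.
    + intros [W [[C [i ->]] nCx]] H; exact (nCx (H C i)).
    + intro H; apply not_all_ex_not in H as [C H].
      apply imply_to_and in H as [i nCx]; exists (fun z => ~ C z); eauto.
  - apply open_bigcup; intros W [C [i ->]]; apply Hl, i.
Qed.

Lemma hausdorff_closed_point a : hausdorff t -> closed t (fun z => z = a).
Proof.
  intros Hh.
  apply (open_ext (U := fun z => exists W, (open t W /\ ~ W a) /\ W z)).
  - intro z; split.
    + intros [W [[_ nWa] Wz]] ->; contradiction.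
    + intro za. destruct (Hh z a za) as [U [V [oU [oV [Uz [Va d]]]]]].
      exists U; split; [split; [exact oU | intro Ua; exact (d a (conj Ua Va))] | exact Uz].
  - apply open_bigcup; intros W [oW _]; exact oW.
Qed.

Lemma clopen_isolated_point a : hausdorff t -> isolated t a -> clopen t (fun z => z = a).
Proof. intros Hh Ha; split; [exact Ha | exact (hausdorff_closed_point a Hh)]. Qed.

Lemma compact_subcover {Y} (m : X -> Y) (K : X -> Prop) (F : (Y -> Prop) -> Prop) :
  compact t -> closed t K ->
  (forall U, F U -> open t (fun x => U (m x))) ->
  (forall x, K x -> exists U, F U /\ U (m x)) ->
  exists l, (forall U, In U l -> F U) /\ forall x, K x -> exists U, In U l /\ U (m x).
Proof.
  intros Hc HK HF Hcov.
  destruct (classic (exists x, K x)) as [[x0 Kx0]|HK0];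
    [|exists nil; split; [intros _ [] | intros x Kx; contradiction (HK0 (ex_intro _ x Kx))]].
  destruct (Hcov x0 Kx0) as [U0 [FU0 _]].
  destruct (Hc (fun W => open t W /\ exists U, F U /\ forall x, W x -> K x -> U (m x)))
    as [l0 [Hl0 Hcov0]].
  - intros W [oW _]; exact oW.
  - intro x. destruct (classic (K x)) as [Kx|nKx].
    + destruct (Hcov x Kx) as [U [FU Ux]].
      exists (fun z => U (m z)); split; [split; [apply HF, FU | exists U; auto] | exact Ux].
    + exists (fun z => ~ K z).
      split; [split; [exact HK | exists U0; split; [exact FU0 | tauto]] | exact nKx].
  - destruct (list_choice (fun W U => forall x, W x -> K x -> U (m x)) F l0) as [l [Hl Hml]].
    { intros W i; destruct (Hl0 W i) as [_ [U [FU HU]]]; eauto. }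
    exists l; split; [exact Hl|].
    intros x Kx. destruct (Hcov0 x) as [W [i Wx]].
    destruct (Hml W i) as [U [j HU]]; eauto.
Qed.

Definition separated (K L : X -> Prop) : Prop :=
  exists U V, open t U /\ open t V /\ (forall x, K x -> U x) /\ (forall x, L x -> V x) /\
    forall x, ~ (U x /\ V x).

Lemma separated_sym K L : separated K L -> separated L K.
Proof.
  intros [U [V [oU [oV [KU [LV d]]]]]].
  exists V, U; repeat split; auto. intros x [Vx Ux]; exact (d x (conj Ux Vx)).
Qed.

Lemma compact_separated K L : compact t -> closed t K ->
  (forall y, K y -> separated (fun z => z = y) L) -> separated K L.
Proof.
  intros Hc HK Hsep.
  pose (F := fun W => open t W /\ exists W', open t W' /\ (forall z, L z -> W' z) /\
                                            forall z, ~ (W z /\ W' z)).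
  destruct (compact_subcover (fun x => x) K F Hc HK) as [l [Hl HlK]].
  - intros W [oW _]; exact oW.
  - intros y Ky. destruct (Hsep y Ky) as [W [W' [oW [oW' [yW [LW' d]]]]]].
    exists W; split; [split; [exact oW | exists W'; auto] | apply yW; reflexivity].
  - destruct (list_choice (fun W W' => forall z, ~ (W z /\ W' z))
                          (fun W' => open t W' /\ forall z, L z -> W' z) l) as [l' [Hl' Hd]].
    { intros W i; destruct (Hl W i) as [_ [W' [oW' [LW' d]]]]; eauto. }
    exists (fun x => exists W, In W l /\ W x), (list_inter l'); repeat split.
    + apply open_bigcup; intros W i; apply (Hl W i).
    + apply open_list_inter; intros W' i; apply (Hl' W' i).
    + exact HlK.
    + intros z Lz W' i; apply (Hl' W' i), Lz.
    + intros z [[W [i Wz]] Iz]. destruct (Hd W i) as [W' [j d]].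
      exact (d z (conj Wz (Iz W' j))).
Qed.

Lemma compact_hausdorff_normal K L : compact t -> hausdorff t -> closed t K -> closed t L ->
  (forall x, ~ (K x /\ L x)) -> separated K L.
Proof.
  intros Hc Hh HK HL dKL. apply compact_separated; auto.
  intros y Ky. apply separated_sym, compact_separated; auto.
  intros z Lz. assert (zy : z <> y) by (intros ->; exact (dKL y (conj Ky Lz))).
  destruct (Hh z y zy) as [U [V [oU [oV [Uz [Vy d]]]]]].
  exists U, V; repeat split; auto; intros x ->; assumption.
Qed.

Definition quasi_component (a x : X) : Prop := forall C, clopen t C -> C a -> C x.

Lemma quasi_component_closed a : closed t (quasi_component a).
Proof.
  apply (open_ext (U := fun x => exists W,
           (exists C, clopen t C /\ C a /\ W = fun z => ~ C z) /\ W x)).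
  - intro x; split.
    + intros [W [[C [HC [Ca ->]]] nCx]] Q; exact (nCx (Q C HC Ca)).
    + intro nQ; apply not_all_ex_not in nQ as [C nQ].
      apply imply_to_and in nQ as [HC nQ]; apply imply_to_and in nQ as [Ca nCx].
      exists (fun z => ~ C z); eauto.
  - apply open_bigcup; intros W [C [[_ cC] [_ ->]]]; exact cC.
Qed.

Lemma quasi_component_clopen_nbhd a O : compact t -> open t O ->
  (forall x, quasi_component a x -> O x) ->
  exists C, clopen t C /\ C a /\ forall x, C x -> O x.
Proof.
  intros Hc oO QO.
  destruct (compact_subcover (fun x => x) (fun x => ~ O x)
              (fun W => exists C, clopen t C /\ C a /\ W = fun z => ~ C z) Hc)
    as [l0 [Hl0 Hcov]].
  - apply (open_ext (U := O)); [intro; split; [auto | apply NNPP] | exact oO].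
  - intros W [C [[_ cC] [_ ->]]]; exact cC.
  - intros x nOx. assert (nQx : ~ quasi_component a x) by (intro Qx; exact (nOx (QO x Qx))).
    apply not_all_ex_not in nQx as [C nQx].
    apply imply_to_and in nQx as [HC nQx]; apply imply_to_and in nQx as [Ca nCx].
    exists (fun z => ~ C z); eauto.
  - destruct (list_choice (fun W C => W = fun z => ~ C z) (fun C => clopen t C /\ C a) l0)
      as [l [Hl Hlink]].
    { intros W i; destruct (Hl0 W i) as [C [HC [Ca ->]]]; eauto. }
    exists (list_inter l); split; [|split].
    + apply clopen_list_inter; intros C i; apply (Hl C i).
    + intros C i; apply (Hl C i).
    + intros x Lx; apply NNPP; intro nOx.
      destruct (Hcov x nOx) as [W [i Wx]]. destruct (Hlink W i) as [C [j ->]].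
      exact (Wx (Lx C j)).
Qed.

Lemma clopen_setI_split C U V : clopen t C -> open t U -> open t V ->
  (forall x, C x -> U x \/ V x) -> (forall x, ~ (U x /\ V x)) ->
  clopen t (fun x => C x /\ U x).
Proof.
  intros [oC cC] oU oV CUV dUV; split; [apply open_setI; auto|].
  apply (open_ext (U := fun x => ~ C x \/ V x)); [|apply open_setU; auto].
  intro x; split.
  - intros [nCx|Vx] [Cx Ux]; [exact (nCx Cx) | exact (dUV x (conj Ux Vx))].
  - intro H. destruct (classic (C x)) as [Cx|]; [|left; auto].
    destruct (CUV x Cx) as [Ux|Vx]; [contradiction (H (conj Cx Ux)) | right; exact Vx].
Qed.

Lemma quasi_component_connected a : compact t -> hausdorff t ->
  connected_set t (quasi_component a).
Proof.
  intros Hc Hh [U [V [oU [oV [QUV [[p [Qp Up]] [[q [Qq Vq]] dQ]]]]]]].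
  assert (QUV' : forall x, quasi_component a x -> U x /\ ~ V x \/ V x /\ ~ U x).
  { intros x Qx. destruct (QUV x Qx) as [Ux|Vx]; [left|right]; split; auto;
      intro; apply (dQ x); auto. }
  destruct (compact_hausdorff_normal (fun x => quasi_component a x /\ ~ V x)
              (fun x => quasi_component a x /\ ~ U x) Hc Hh)
    as [U' [V' [oU' [oV' [KU' [KV' d']]]]]].
  - apply (open_ext (U := fun x => ~ quasi_component a x \/ V x));
      [|apply open_setU; [apply quasi_component_closed | exact oV]].
    intro x; split; [intros [] []; auto | intro H].
    destruct (classic (quasi_component a x)); [right; apply NNPP|left]; auto.
  - apply (open_ext (U := fun x => ~ quasi_component a x \/ U x));
      [|apply open_setU; [apply quasi_component_closed | exact oU]].
    intro x; split; [intros [] []; auto | intro H].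
    destruct (classic (quasi_component a x)); [right; apply NNPP|left]; auto.
  - intros x [[Qx nVx] [_ nUx]]. destruct (QUV x Qx); auto.
  - assert (QU'V' : forall x, quasi_component a x -> U' x \/ V' x).
    { intros x Qx. destruct (QUV' x Qx) as [[_ nVx]|[_ nUx]]; auto. }
    destruct (quasi_component_clopen_nbhd a (fun x => U' x \/ V' x) Hc
                (open_setU _ _ oU' oV') QU'V') as [C [HC [Ca CUV]]].
    assert (U'p : U' p) by (apply KU'; destruct (QUV' p Qp) as [[]|[]]; tauto).
    assert (V'q : V' q) by (apply KV'; destruct (QUV' q Qq) as [[]|[]]; tauto).
    destruct (CUV a Ca) as [U'a|V'a].
    + destruct (Qq _ (clopen_setI_split C U' V' HC oU' oV' CUV d') (conj Ca U'a)) as [_ U'q].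
      exact (d' q (conj U'q V'q)).
    + assert (dV'U' : forall x, ~ (V' x /\ U' x)) by (intros x [? ?]; apply (d' x); auto).
      assert (CVU : forall x, C x -> V' x \/ U' x) by (intros x Cx; destruct (CUV x Cx); auto).
      destruct (Qp _ (clopen_setI_split C V' U' HC oV' oU' CVU dV'U') (conj Ca V'a))
        as [_ V'p].
      exact (d' p (conj U'p V'p)).
Qed.

End Topology.

Lemma stone_clopen_separation {X} (t : topology X) a b : stone_space t -> a <> b ->
  exists C, clopen t C /\ C a /\ ~ C b.
Proof.
  intros [Ht [Hc [Hh Htd]]] ab. apply NNPP; intro Hn. apply ab.
  apply (Htd _ (quasi_component_connected X t Ht a Hc Hh)).
  - intros C _ Ca; exact Ca.
  - intros C HC Ca; apply NNPP; intro nCb; exact (Hn (ex_intro _ C (conj HC (conj Ca nCb)))).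
Qed.

Section Q6.
Variables (S : Type) (t : topology S).

Definition Q6_set (L R : S -> Prop) : S + S -> Prop :=
  fun z => match z with inl s => L s | inr s => R s end.

Lemma Q6_set_clopen L R : clopen t L -> clopen t R -> clopen (Q6_top t) (Q6_set L R).
Proof. intros [oL cL] [oR cR]; split; split; assumption. Qed.

Lemma Q6_topology : is_topology t -> is_topology (Q6_top t).
Proof.
  intros Ht. split; [|split].
  - split; apply open_setT; exact Ht.
  - intros U V [oU1 oU2] [oV1 oV2]; split; apply open_setI; auto.
  - intros F HF; split; apply open_bigcup_preimage; auto; intros U FU; apply (HF U FU).
Qed.

Lemma Q6_compact : is_topology t -> compact t -> compact (Q6_top t).
Proof.
  intros Ht Hc F HF Hcov.
  assert (HT : closed t (fun _ => True))
    by (apply (open_ext (U := fun _ => False)); [intro; tauto | apply open_set0, Ht]).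
  destruct (compact_subcover _ _ inl (fun _ => True) F Hc HT) as [l1 [Hl1 Hcov1]];
    [intros U FU; apply (HF U FU) | intros s _; apply Hcov|].
  destruct (compact_subcover _ _ inr (fun _ => True) F Hc HT) as [l2 [Hl2 Hcov2]];
    [intros U FU; apply (HF U FU) | intros s _; apply Hcov|].
  exists (l1 ++ l2); split.
  - intros U i; apply in_app_or in i as [i|i]; auto.
  - intros [s|s];
      [destruct (Hcov1 s Logic.I) as [U [i Us]] | destruct (Hcov2 s Logic.I) as [U [i Us]]];
      exists U; split; auto; apply in_or_app; auto.
Qed.

Lemma Q6_zeta_continuous : continuous (Q6_top t) (Q6_top t) Q6_zeta.
Proof. intros V [oV1 oV2]; split; assumption. Qed.

Variable I : S -> Prop.

Lemma Q6_set_decreasing L R :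
  (forall a b, R b -> a <> b \/ ~ I a -> L a) -> decreasing (Q6_le I) (Q6_set L R).
Proof.
  intros HLR x y Hx [<-|H]; [exact Hx|].
  destruct x as [b|b], y as [a|a]; try contradiction.
  exact (HLR a b Hx H).
Qed.

Lemma Q6_partial_order : partial_order (Q6_le I).
Proof.
  split; [|split].
  - intro x; left; reflexivity.
  - intros [x|x] [y|y] [e|H] [e'|H']; auto; contradiction.
  - intros x y z [<-|H] [<-|H']; [left | right | right |]; auto.
    destruct x, y, z; contradiction.
Qed.

Lemma Q6_zeta_antitone x y : Q6_le I x y -> Q6_le I (Q6_zeta y) (Q6_zeta x).
Proof.
  intros [<-|H]; [left; reflexivity|].
  destruct x as [a|a], y as [b|b]; try contradiction.
  right. destruct (classic (a = b)) as [<-|ab]; [exact H | left; auto].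
Qed.

Lemma Q6_zeta_involutive (x : S + S) : Q6_zeta (Q6_zeta x) = x.
Proof. destruct x; reflexivity. Qed.

(* The points s with ζ(s) strictly above some point of A. *)
Definition Q6_shadow (A : S -> Prop) (s : S) : Prop := exists a, A a /\ (a <> s \/ ~ I a).

Lemma Q6_upset A z : upset (Q6_le I) A z <->
  Q6_set (fun s => A (inl s)) (fun s => A (inr s) \/ Q6_shadow (fun a => A (inl a)) s) z.
Proof.
  split.
  - intros [x [Ax [<-|H]]]; [destruct x; simpl; auto|].
    destruct x as [a|a], z as [b|b]; try contradiction. right; exists a; auto.
  - destruct z as [b|b]; simpl.
    + intro Ab; exists (inl b); split; [exact Ab | left; reflexivity].
    + intros [Ab|[a [Aa H]]]; [exists (inr b) | exists (inl a)]; split; auto; [left|right]; auto.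
Qed.

Lemma Q6_height_one (a b : S) : a <> b -> height_is (Q6_le I) 1.
Proof.
  intros ab; split.
  - exists (fun i => match i with 0 => inl a | _ => inr b end).
    intros i hi; replace i with 0 by lia; split; [right; left; exact ab | discriminate].
  - intros [f Hf].
    destruct (Hf 0 ltac:(lia)) as [[e0|H0] n0]; [contradiction|].
    destruct (Hf 1 ltac:(lia)) as [[e1|H1] n1]; [contradiction|].
    destruct (f 0), (f 1), (f 2); contradiction.
Qed.

Section Stone.
Hypotheses (Hst : stone_space t) (HI : forall s, I s -> isolated t s).

Lemma Q6_priestley_separation x y : ~ Q6_le I y x ->
  exists A, clopen (Q6_top t) A /\ decreasing (Q6_le I) A /\ A x /\ ~ A y.
Proof.
  destruct Hst as [Ht [_ [Hh _]]].
  intros nyx. destruct x as [a|a], y as [b|b].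
  - assert (ab : a <> b) by (intros ->; apply nyx; left; reflexivity).
    destruct (stone_clopen_separation t a b Hst ab) as [C [HC [Ca nCb]]].
    exists (Q6_set C (fun _ => False)).
    split; [apply Q6_set_clopen; [exact HC | apply clopen_set0, Ht]|].
    split; [apply Q6_set_decreasing; intros ? ? []|]; auto.
  - exists (Q6_set (fun _ => True) (fun _ => False)).
    split; [apply Q6_set_clopen; [apply clopen_setT | apply clopen_set0]; exact Ht|].
    split; [apply Q6_set_decreasing; auto|]; simpl; auto.
  - assert (Hb : b = a /\ I b) by (split; apply NNPP; intro H; apply nyx; right; simpl; tauto).
    destruct Hb as [-> Ia].
    exists (Q6_set (fun s => s <> a) (fun s => s = a)); split;
      [apply Q6_set_clopen; [apply clopen_setC|]; apply clopen_isolated_point; auto|].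
    split; [apply Q6_set_decreasing; intros c ? -> [ca|nIc]; [exact ca | intros ->; auto]|].
    simpl; auto.
  - assert (ab : a <> b) by (intros ->; apply nyx; left; reflexivity).
    destruct (stone_clopen_separation t a b Hst ab) as [C [HC [Ca nCb]]].
    exists (Q6_set (fun _ => True) C).
    split; [apply Q6_set_clopen; [apply clopen_setT, Ht | exact HC]|].
    split; [apply Q6_set_decreasing; auto|]; simpl; auto.
Qed.

Lemma Q6_shadow_clopen A : clopen t (Q6_shadow A).
Proof.
  destruct Hst as [Ht [_ [Hh _]]].
  destruct (classic (exists a, A a /\ ~ I a)) as [[a [Aa nIa]]|Hall].
  { apply (clopen_ext (U := fun _ => True)); [|apply clopen_setT, Ht].
    intro s; split; [intros _; exists a; auto | auto]. }
  destruct (classic (exists a b, A a /\ A b /\ a <> b)) as [[a [b [Aa [Ab ab]]]]|Huniq].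
  { apply (clopen_ext (U := fun _ => True)); [|apply clopen_setT, Ht].
    intro s; split; [intros _ | auto].
    destruct (classic (a = s)) as [<-|]; [exists b | exists a]; auto. }
  destruct (classic (exists a, A a)) as [[a Aa]|Hnone].
  - assert (Ia : I a) by (apply NNPP; intro; apply Hall; eauto).
    apply (clopen_ext (U := fun s => s <> a));
      [|apply clopen_setC, clopen_isolated_point; auto].
    intro s; split; [intro sa; exists a; auto|].
    intros [c [Ac [cs|nIc]]]; [|exfalso; apply Hall; eauto].
    assert (c = a) as -> by (apply NNPP; intro; apply Huniq; eauto). auto.
  - apply (clopen_ext (U := fun _ => False)); [|apply clopen_set0, Ht].
    intro s; split; [intros [] | intros [a [Aa _]]; apply Hnone; eauto].
Qed.

Lemma Q6_upset_clopen A : clopen (Q6_top t) A -> clopen (Q6_top t) (upset (Q6_le I) A).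
Proof.
  destruct Hst as [Ht _].
  intros [[oA1 oA2] [cA1 cA2]].
  apply (clopen_ext (U := Q6_set (fun s => A (inl s))
                        (fun s => A (inr s) \/ Q6_shadow (fun a => A (inl a)) s))).
  { intro z; symmetry; apply Q6_upset. }
  apply Q6_set_clopen; [split; assumption|].
  apply clopen_setU; [exact Ht | split; assumption | apply Q6_shadow_clopen].
Qed.

End Stone.

End Q6.

Theorem theorem4p7 (S : Type) (tS : topology S) (I : S -> Prop) :
  stone_space tS ->
  (exists a b c : S, a <> b /\ a <> c /\ b <> c) ->
  (forall s, I s -> isolated tS s) ->
  pm_space (Q6_top tS) (Q6_le I) Q6_zeta /\ height_is (Q6_le I) 1.
Proof.
  intros Hst [a [b [_ [ab _]]]] HI.
  pose proof Hst as [Ht [Hc _]].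
  split; [|exact (Q6_height_one S I a b ab)].
  split; [exact (Q6_topology S tS Ht)|].
  split; [split; [exact (Q6_partial_order S I) | split]|].
  - exact (Q6_compact S tS Ht Hc).
  - exact (Q6_priestley_separation S tS I Hst HI).
  - split; [intros A HA _; exact (Q6_upset_clopen S tS I Hst HI A HA)|].
    split; [exact (Q6_zeta_continuous S tS)|].
    split; [exact (Q6_zeta_antitone S I) | exact (Q6_zeta_involutive S)].
Qed.
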